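(* Let $\mathcal H=(M,n,\mathcal R)$ be a BMS, let $S\subseteq\mathbb R^n$ be a bounded convex polytope, and let $x_0$ be a point in the interior of $S$. Then the scheduler has a winning strategy from $x_0$ in the schedulability game with safety set $S$ if and only if $\mathcal H$ is safe.
   Context: A multi-mode system is a tuple $\mathcal H=(M,n,\mathcal R)$ with $M$ a finite nonempty set of modes, $n\ge1$ variables, and $\mathcal R:M\to 2^{\mathbb R^n}$ giving nonempty rate sets; it is a BMS if each $\mathcal R(m)$ is a bounded convex polytope, and a CMS if each $\mathcal R(m)$ is a singleton. An instance of $(M,n,\mathcal R)$ is a CMS $(M,n,R)$ with $R(m)\in\mathcal R(m)$ for all $m$. A CMS $(M,n,R)$ is safe if there are $t_m\ge0$ with $\sum_m t_m=1$ and $\sum_m t_mR(m)=\vec0$. $\mathrm{Ext}(\mathcal H)=(M,n,\mathcal R')$ where $\mathcal R'(m)$ is the vertex set of $\mathcal R(m)$; $\mathcal H$ is safe if every instance of $\mathrm{Ext}(\mathcal H)$ is safe. The schedulability game from $x_0$: in round $i\ge1$ the scheduler chooses $(m_i,t_i)\in M\times\mathbb R_{>0}$, the environment chooses $r_i\in\mathcal R(m_i)$, and $x_i=x_{i-1}+t_ir_i$. Scheduler strategies map finite histories $\langle x_0,(m_1,t_1),r_1,x_1,\dots,x_k\rangle$ to timed moves; environment strategies map a history and the current timed move $(m,t)$ to a rate in $\mathcal R(m)$. A run is $S$-safe if $x_i\in S$ and $x_i+tr_{i+1}\in S$ for all $i\ge0$, $t\in[0,t_{i+1}]$, and non-Zeno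 if $\sum_it_i=\infty$. A scheduler strategy is winning if against every environment strategy the run is $S$-safe and non-Zeno. *)

From Stdlib Require Import Reals.
From mathcomp Require Import all_boot.
Set Implicit Arguments. Unset Strict Implicit. Unset Printing Implicit Defensive.
Local Open Scope R_scope.

Definition vec (n : nat) := 'I_n -> R.

Definition conv_hull (n k : nat) (p : 'I_k -> vec n) (y : vec n) : Prop :=
  exists w : 'I_k -> R,
    (forall j, 0 <= w j) /\
    \big[Rplus/R0]_(j : 'I_k) w j = 1 /\
    (forall i, y i = \big[Rplus/R0]_(j : 'I_k) (w j * p j i)).

Definition is_polytope (n : nat) (P : vec n -> Prop) : Prop :=
  exists (k : nat) (p : 'I_k -> vec n),
    (0 < k)%N /\ (forall y, P y <-> conv_hull p y).

Definition is_vertex (n : nat) (P : vec n -> Prop) (x : vec n) : Prop :=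
  P x /\
  forall (y z : vec n) (l : R), P y -> P z -> 0 < l < 1 ->
    (forall i, x i = l * y i + (1 - l) * z i) -> (forall i, y i = z i).

Definition in_interior (n : nat) (S : vec n -> Prop) (x : vec n) : Prop :=
  exists eps, 0 < eps /\ forall y : vec n, (forall i, Rabs (y i - x i) < eps) -> S y.

Definition is_BMS (M : finType) (n : nat) (Rates : M -> vec n -> Prop) : Prop :=
  (exists m : M, True) /\ (0 < n)%N /\ forall m, is_polytope (Rates m).

Definition safe_CMS (M : finType) (n : nat) (Rc : M -> vec n) : Prop :=
  exists t : M -> R,
    (forall m, 0 <= t m) /\
    \big[Rplus/R0]_(m : M) t m = 1 /\
    (forall i, \big[Rplus/R0]_(m : M) (t m * Rc m i) = 0).

(* Instances of Ext(H): choose a vertex of each rate set *)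
Definition instance_of_Ext (M : finType) (n : nat) (Rates : M -> vec n -> Prop)
  (Rc : M -> vec n) : Prop := forall m, is_vertex (Rates m) (Rc m).

Definition safe_MMS (M : finType) (n : nat) (Rates : M -> vec n -> Prop) : Prop :=
  forall Rc, instance_of_Ext Rates Rc -> safe_CMS Rc.

(* A finite history <x0,(m1,t1),r1,x1,...,(mk,tk),rk,xk> is represented by x0 and
   the list of rounds (m_i,t_i,r_i); the x_i are determined by x_i = x_(i-1)+t_i r_i. *)
Definition round (M : finType) (n : nat) := (M * R * vec n)%type.
Definition history (M : finType) (n : nat) := (vec n * seq (round M n))%type.

Definition pos (M : finType) (n : nat) (x0 : vec n) (rs : seq (round M n)) : vec n :=
  fun i => x0 i + foldr (fun (rd : round M n) acc => rd.1.2 * rd.2 i + acc) R0 rs.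

Definition sched_strategy (M : finType) (n : nat) := history M n -> (M * R)%type.
Definition env_strategy (M : finType) (n : nat) := history M n -> M -> R -> vec n.

Definition valid_sched (M : finType) (n : nat) (sg : sched_strategy M n) : Prop :=
  forall h, 0 < (sg h).2.

Definition valid_env (M : finType) (n : nat) (Rates : M -> vec n -> Prop)
  (en : env_strategy M n) : Prop :=
  forall h m t, Rates m (en h m t).

Fixpoint run_rounds (M : finType) (n : nat) (x0 : vec n) (sg : sched_strategy M n)
  (en : env_strategy M n) (k : nat) : seq (round M n) :=
  match k with
  | O => [::]
  | S k' =>
      let rs := run_rounds x0 sg en k' in
      let mt := sg (x0, rs) in
      rcons rs (mt.1, mt.2, en (x0, rs) mt.1 mt.2)
  end.

(* round number i+1 of the run: (m_(i+1), t_(i+1), r_(i+1)) *)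
Definition next_round (M : finType) (n : nat) (x0 : vec n) (sg : sched_strategy M n)
  (en : env_strategy M n) (i : nat) : round M n :=
  let rs := run_rounds x0 sg en i in
  let mt := sg (x0, rs) in (mt.1, mt.2, en (x0, rs) mt.1 mt.2).

Definition run_pos (M : finType) (n : nat) (x0 : vec n) (sg : sched_strategy M n)
  (en : env_strategy M n) (i : nat) : vec n := pos x0 (run_rounds x0 sg en i).

Definition run_S_safe (M : finType) (n : nat) (S : vec n -> Prop) (x0 : vec n)
  (sg : sched_strategy M n) (en : env_strategy M n) : Prop :=
  forall i : nat,
    S (run_pos x0 sg en i) /\
    forall t, 0 <= t <= (next_round x0 sg en i).1.2 ->
      S (fun j => run_pos x0 sg en i j + t * (next_round x0 sg en i).2 j).

Definition run_non_Zeno (M : finType) (n : nat) (x0 : vec n)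
  (sg : sched_strategy M n) (en : env_strategy M n) : Prop :=
  forall B : R, exists k : nat,
    B < \big[Rplus/R0]_(i < k) (next_round x0 sg en i).1.2.

Definition winning (M : finType) (n : nat) (Rates : M -> vec n -> Prop)
  (S : vec n -> Prop) (x0 : vec n) (sg : sched_strategy M n) : Prop :=
  valid_sched sg /\
  forall en : env_strategy M n, valid_env Rates en ->
    run_S_safe S x0 sg en /\ run_non_Zeno x0 sg en.

(* Both directions rest on Gordan's alternative (proved by induction on the
   number of vectors): finitely many vectors either have 0 in their convex
   hull or are strictly separated from 0 by a hyperplane.
   - Necessity: if an instance (r_m) of Ext(H) is unsafe, some w satisfies
     <w, r_m> >= delta > 0 for all m; an environment always answering r_m
     drives <w, x> to infinity along any non-Zeno run, leaving the bounded S.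
   - Sufficiency: every vertex instance being safe, each direction d admits a
     mode all of whose rates r satisfy <d, r> <= 0 (a polytope on which <d, .>
     is somewhere positive has a vertex where it is positive).  Playing, in
     round k+1, such a mode for d = x_k - x0 with duration c/(k+2) keeps
     |x - x0|^2 <= K c^2 (K bounds the squared rates), inside S for c small,
     while the durations form a divergent harmonic series. *)

From HB Require Import structures.
From Pilot Require Import Defs.
From Stdlib Require Import Reals Lra Psatz Classical IndefiniteDescription.
From mathcomp Require Import all_boot.
Set Implicit Arguments. Unset Strict Implicit. Unset Printing Implicit Defensive.
Local Open Scope R_scope.

(* Real addition and multiplication as monoid laws, so that the generic bigop
   lemmas (bigD1, big_split, big_distrr, exchange_big, ...) apply to the sums
   \big[Rplus/R0] used in the definitions. *)
Lemma Rplus_associative : associative Rplus. Proof. by move=> *; rewrite Rplus_assoc. Qed.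
HB.instance Definition _ := Monoid.isComLaw.Build R R0 Rplus Rplus_associative Rplus_comm Rplus_0_l.
HB.instance Definition _ := Monoid.isMulLaw.Build R R0 Rmult Rmult_0_l Rmult_0_r.
HB.instance Definition _ := Monoid.isAddLaw.Build R Rmult Rplus Rmult_plus_distr_r Rmult_plus_distr_l.

(* Sums produced by the generic bigop lemmas carry the monoid structure in
   their operator, so lra/nra may see two convertible sums as different atoms.
   [abstract_sums] replaces every real sum (in the goal and hypotheses) by a
   variable, identifying sums up to conversion. *)
Ltac abstract_sums :=
  repeat match goal with H : context [@bigop R _ R0 _ _] |- _ => revert H end;
  repeat match goal with
  | |- context [@bigop R ?I R0 ?r ?F] =>
      let s := fresh "s" in set s := @bigop R I R0 r F; clearbody s
  end; intros.
Tactic Notation "lra_sums" := abstract_sums; lra.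
Tactic Notation "nra_sums" := abstract_sums; nra.

Lemma sum_ord_recr k (F : nat -> R) :
  \big[Rplus/R0]_(i < k.+1) F i = \big[Rplus/R0]_(i < k) F i + F k.
Proof. by rewrite big_ord_recr. Qed.

Section FiniteSums.
Variable I : finType.

Lemma sum_ge0 (F : I -> R) : (forall i, 0 <= F i) -> 0 <= \big[Rplus/R0]_(i : I) F i.
Proof. by move=> F0; apply: big_ind => // *; lra. Qed.

Lemma sum_le (F G : I -> R) : (forall i, F i <= G i) ->
  \big[Rplus/R0]_(i : I) F i <= \big[Rplus/R0]_(i : I) G i.
Proof. by move=> FG; apply: (big_ind2 (fun x y => x <= y)) => // *; lra. Qed.

Lemma term_le_sum (F : I -> R) j : (forall i, 0 <= F i) -> F j <= \big[Rplus/R0]_(i : I) F i.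
Proof.
move=> F0; rewrite (bigD1 j) //=.
have : 0 <= \big[Rplus/R0]_(i | i != j) F i by apply: big_ind => // *; lra.
lra.
Qed.

Lemma sum_opp (F : I -> R) : \big[Rplus/R0]_(i : I) (- F i) = - \big[Rplus/R0]_(i : I) F i.
Proof. by apply: (big_ind2 (fun x y => x = - y)) => [|*|//]; lra. Qed.

Lemma weighted_pos (c a : I -> R) : (forall j, 0 <= c j) -> 0 < \big[Rplus/R0]_(j : I) c j ->
  (forall j, 0 < a j) -> 0 < \big[Rplus/R0]_(j : I) (c j * a j).
Proof.
move=> c0 cs a0; case: (classic (exists j, 0 < c j)) => [[j cj]|nc].
  have := @term_le_sum (fun k => c k * a k) j (fun i => Rmult_le_pos _ _ (c0 i) (Rlt_le _ _ (a0 i))).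
  have := a0 j; nra.
have : \big[Rplus/R0]_(j : I) c j <= \big[Rplus/R0]_(j : I) (fun _ => 0) j.
  by apply: sum_le => j; apply: Rnot_lt_le => cj; apply: nc; exists j.
rewrite [X in _ <= X]big1 //; lra.
Qed.

Lemma uniform_pos_lower_bound (f : I -> R) : (forall j, 0 < f j) ->
  exists d, 0 < d /\ forall j, d <= f j.
Proof.
move=> f0; set s := \big[Rplus/R0]_(j : I) / f j.
have f0' : forall j, 0 <= / f j by move=> j; apply/Rlt_le/Rinv_0_lt_compat.
have s0 : 0 <= s by apply: sum_ge0.
exists (/ (1 + s)); split; first by apply: Rinv_0_lt_compat; lra.
move=> j; have := term_le_sum j f0'; rewrite -/s => hj; have fj := f0 j.
have e1 : f j * / f j = 1 by field; lra.
have e2 : (1 + s) * / (1 + s) = 1 by field; lra.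
have : 0 < / (1 + s) by apply: Rinv_0_lt_compat; lra.
nra.
Qed.

Lemma small_perturbation_pos (p b : I -> R) : (forall j, 0 < p j) ->
  exists e, 0 < e /\ forall j, 0 < p j + e * b j.
Proof.
move=> p0; set s := \big[Rplus/R0]_(j : I) (Rabs (b j) / p j).
have q0 : forall j, 0 <= Rabs (b j) / p j.
  by move=> j; apply: Rmult_le_pos; [exact: Rabs_pos | apply/Rlt_le/Rinv_0_lt_compat].
have s0 : 0 <= s by apply: sum_ge0.
exists (/ (1 + s)); split; first by apply: Rinv_0_lt_compat; lra.
move=> j; have := term_le_sum j q0; rewrite -/s => hj; have pj := p0 j.
have bs : Rabs (b j) <= s * p j.
  have -> : Rabs (b j) = Rabs (b j) / p j * p j by field; lra.
  nra.
have e2 : (1 + s) * / (1 + s) = 1 by field; lra.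
have : 0 < / (1 + s) by apply: Rinv_0_lt_compat; lra.
have := Rle_abs (- b j); rewrite Rabs_Ropp.
nra.
Qed.

Lemma finite_argmax (f : I -> R) (i0 : I) : exists j, forall i, f i <= f j.
Proof.
suff [j jmax] : exists j, forall i, i \in enum I -> f i <= f j.
  by exists j => i; apply: jmax; rewrite mem_enum.
elim: (enum I) => [|x s [j IH]]; first by exists i0.
case: (Rle_lt_dec (f x) (f j)) => fx.
  by exists j => i; rewrite in_cons => /orP [/eqP -> // | /IH].
exists x => i; rewrite in_cons => /orP [/eqP -> | /IH]; lra.
Qed.

End FiniteSums.

Definition dot (n : nat) (w v : vec n) : R := \big[Rplus/R0]_(i < n) (w i * v i).

Section InnerProduct.
Variable n : nat.
Implicit Types (u v w y z : vec n).

Lemma dot_linl w a b (x y : R) v :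
  (forall i, w i = x * a i + y * b i) -> dot w v = x * dot a v + y * dot b v.
Proof.
move=> E; rewrite /dot !big_distrr -big_split /=; apply: eq_bigr => i _; rewrite E; ring.
Qed.

Lemma dot_linr w a b (x y : R) v :
  (forall i, v i = x * a i + y * b i) -> dot w v = x * dot w a + y * dot w b.
Proof.
move=> E; rewrite /dot !big_distrr -big_split /=; apply: eq_bigr => i _; rewrite E; ring.
Qed.

Lemma dot_sq_ge0 u : 0 <= dot u u.
Proof. by apply: sum_ge0 => i; nra. Qed.

Lemma dot_sq_term u i : u i * u i <= dot u u.
Proof. by apply: (term_le_sum (F := fun i => u i * u i)) => j; nra. Qed.

Lemma dot_sq_eq0 u : dot u u <= 0 -> forall i, u i = 0.
Proof. by move=> u0 i; have := dot_sq_term u i; nra. Qed.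

Lemma dot_comb_points (J : finType) (c : J -> R) (p : J -> vec n) w y :
  (forall i, y i = \big[Rplus/R0]_(j : J) (c j * p j i)) ->
  dot w y = \big[Rplus/R0]_(j : J) (c j * dot w (p j)).
Proof.
move=> E; rewrite /dot.
transitivity (\big[Rplus/R0]_(i < n) \big[Rplus/R0]_(j : J) (w i * (c j * p j i))).
  by apply: eq_bigr => i _; rewrite E big_distrr.
rewrite exchange_big /=; apply: eq_bigr => j _; rewrite big_distrr /=.
by apply: eq_bigr => i _; ring.
Qed.

Lemma dot_sq_convex_comb y z v (l : R) :
  (forall i, v i = l * y i + (1 - l) * z i) ->
  dot v v = l * dot y y + (1 - l) * dot z z
     - l * (1 - l) * dot (fun i => y i - z i) (fun i => y i - z i).
Proof.
move=> E; rewrite /dot (big_distrr l) (big_distrr (1 - l)) (big_distrr (l * (1 - l))) /=.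
rewrite /Rminus -sum_opp -!big_split /=; apply: eq_bigr => i _; rewrite E; ring.
Qed.

Lemma dot_sq_step d r z (t K : R) :
  dot d r <= 0 -> 0 <= t -> dot r r <= K -> (forall i, z i = d i + t * r i) ->
  dot z z <= dot d d + t * t * K.
Proof.
move=> dr t0 rK E.
have -> : dot z z = dot d d + 2 * t * dot d r + t * t * dot r r.
  rewrite /dot (big_distrr (2 * t)) (big_distrr (t * t)) -!big_split /=.
  by apply: eq_bigr => i _; rewrite E; ring.
have : t * t * dot r r <= t * t * K by apply: Rmult_le_compat_l; nra.
nra.
Qed.

Lemma dot_sq_jensen k (c : 'I_k -> R) (p : 'I_k -> vec n) y :
  (forall j, 0 <= c j) -> \big[Rplus/R0]_(j < k) c j = 1 ->
  (forall i, y i = \big[Rplus/R0]_(j < k) (c j * p j i)) ->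
  dot y y <= \big[Rplus/R0]_(j < k) (c j * dot (p j) (p j)).
Proof.
move=> c0 cs E.
have jensen1 : forall a : 'I_k -> R,
    \big[Rplus/R0]_(j < k) (c j * a j) * \big[Rplus/R0]_(j < k) (c j * a j)
      <= \big[Rplus/R0]_(j < k) (c j * (a j * a j)).
  move=> a; set m := \big[Rplus/R0]_(j < k) (c j * a j).
  have : 0 <= \big[Rplus/R0]_(j < k) (c j * ((a j - m) * (a j - m))).
    by apply: sum_ge0 => j; apply: Rmult_le_pos => //; exact: Rle_0_sqr.
  have -> : \big[Rplus/R0]_(j < k) (c j * ((a j - m) * (a j - m))) =
      \big[Rplus/R0]_(j < k) (c j * (a j * a j)) + (-2 * m) * m
      + (m * m) * \big[Rplus/R0]_(j < k) c j.
    rewrite {4}/m (big_distrr (-2 * m)) (big_distrr (m * m)) -!big_split /=.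
    by apply: eq_bigr => j _; ring.
  rewrite cs; lra.
apply: (@Rle_trans _ (\big[Rplus/R0]_(i < n) \big[Rplus/R0]_(j < k) (c j * (p j i * p j i)))).
  by apply: sum_le => i; rewrite E; exact: jensen1.
rewrite exchange_big /=; apply: Req_le; apply: eq_bigr => j _.
by rewrite /dot big_distrr /=; apply: eq_bigr => i _; ring.
Qed.

End InnerProduct.

Section Gordan.
Variable n : nat.

Definition null_comb (k : nat) (v : 'I_k -> vec n) : Prop :=
  exists c : 'I_k -> R, (forall j, 0 <= c j) /\ 0 < \big[Rplus/R0]_(j < k) c j /\
    forall i, \big[Rplus/R0]_(j < k) (c j * v j i) = 0.

Definition separated (J : finType) (v : J -> vec n) : Prop :=
  exists w : vec n, forall j, 0 < dot w (v j).

Definition cons_coeff k (c0 : R) (c : 'I_k -> R) (j : 'I_k.+1) : R :=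
  if unlift ord0 j is Some j' then c j' else c0.

Lemma cons_coeff_ge0 k c0 (c : 'I_k -> R) :
  0 <= c0 -> (forall j, 0 <= c j) -> forall j, 0 <= cons_coeff c0 c j.
Proof. by move=> c00 cj j; rewrite /cons_coeff; case: (unlift ord0 j). Qed.

Lemma sum_cons_coeff k c0 (c : 'I_k -> R) (F : 'I_k.+1 -> R) :
  \big[Rplus/R0]_(j < k.+1) (cons_coeff c0 c j * F j) =
  c0 * F ord0 + \big[Rplus/R0]_(j < k) (c j * F (lift ord0 j)).
Proof.
rewrite big_ord_recl /cons_coeff unlift_none.
by congr (_ + _); apply: eq_bigr => j _; rewrite liftK.
Qed.

Lemma sum_cons_coeff1 k c0 (c : 'I_k -> R) :
  \big[Rplus/R0]_(j < k.+1) cons_coeff c0 c j = c0 + \big[Rplus/R0]_(j < k) c j.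
Proof.
have E := sum_cons_coeff c0 c (fun _ => 1).
have F : forall (m : nat) (a : 'I_m -> R),
    \big[Rplus/R0]_(j < m) (a j * 1) = \big[Rplus/R0]_(j < m) a j.
  by move=> m a; apply: eq_bigr => j _; ring.
by rewrite !F Rmult_1_r in E.
Qed.

Section GordanStep.
Variables (k : nat) (v : 'I_k.+1 -> vec n).
Local Notation u := (v ord0).
Local Notation V := (fun j : 'I_k => v (lift ord0 j)).

Lemma null_comb_tail : null_comb V -> null_comb v.
Proof.
move=> [c [c0 [cs cv]]]; exists (cons_coeff 0 c); split; first exact: cons_coeff_ge0 (Rle_refl 0) c0.
split; first by rewrite sum_cons_coeff1; lra.
by move=> i; rewrite (sum_cons_coeff 0 c (fun j => v j i)) cv; ring.
Qed.

Lemma null_comb_head0 : (forall i, u i = 0) -> null_comb v.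
Proof.
move=> u0; exists (cons_coeff 1 (fun _ => 0)); split.
  by apply: cons_coeff_ge0 => *; lra.
rewrite sum_cons_coeff1 big1 //; split; first lra.
move=> i; rewrite (sum_cons_coeff 1 _ (fun j => v j i)) u0 big1 => *; ring.
Qed.

(* Suppose w' separates the tail V
   but not the head u, i.e. dot w' u <= 0, and set a := - dot w' u >= 0.
   The vectors Q j := (dot w' (V j)) u + a (V j) are the projections of the
   V j along u onto the hyperplane w'^perp (up to positive scaling). *)
Variable w' : vec n.
Local Notation a := (- dot w' u).
Local Notation Q := (fun (j : 'I_k) (i : 'I_n) => dot w' (V j) * u i + a * V j i).

Lemma null_comb_proj : (forall j, 0 < dot w' (V j)) -> 0 <= a ->
  null_comb Q -> null_comb v.
Proof.
move=> w'V a0 [lam [lam0 [lams lamQ]]].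
exists (cons_coeff (\big[Rplus/R0]_(j < k) (lam j * dot w' (V j))) (fun j => a * lam j)).
have head0 : 0 < \big[Rplus/R0]_(j < k) (lam j * dot w' (V j)) by apply: weighted_pos.
split; first by apply: cons_coeff_ge0 => [|j]; [lra | have := lam0 j; nra].
split.
  rewrite sum_cons_coeff1 -big_distrr /=.
  by have := Rmult_le_pos _ _ a0 (Rlt_le _ _ lams); lra_sums.
move=> i; rewrite (sum_cons_coeff _ _ (fun j => v j i)) -(lamQ i) big_distrl /= -big_split /=.
by apply: eq_bigr => j _; ring.
Qed.

(* A separator w'' of the Q j, corrected to be orthogonal to u and then pushed
   slightly towards u, separates u and the V j (this needs u <> 0). *)
Lemma separated_proj : 0 < dot u u -> separated Q -> separated v.
Proof.
move=> uu [w'' w''Q].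
set w0 := fun i => a * w'' i + dot w'' u * w' i.
have w0u : dot w0 u = 0.
  by rewrite (@dot_linl _ w0 w'' w' a (dot w'' u)) //; ring.
have w0V : forall j, 0 < dot w0 (V j).
  move=> j; have := w''Q j.
  rewrite (@dot_linl _ w0 w'' w' a (dot w'' u)) //.
  rewrite (@dot_linr _ w'' u (V j) (dot w' (V j)) a (Q j)) //.
  by nra.
have [e [e0 eV]] := small_perturbation_pos (fun j => dot u (V j)) w0V.
exists (fun i => 1 * w0 i + e * u i) => j.
rewrite (@dot_linl _ _ w0 u 1 e) //.
case: (unliftP ord0 j) => [j'|] ->; last by rewrite w0u; nra.
by have := eV j'; lra.
Qed.

End GordanStep.

Lemma gordan_ord k (v : 'I_k -> vec n) : null_comb v \/ separated v.
Proof.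
elim: k v => [|k IH] v; first by right; exists (fun _ => 0); case.
set u := v ord0; set V : 'I_k -> vec n := fun j => v (lift ord0 j).
case: (IH V) => [/null_comb_tail | [w' w'V]]; first by left.
have [uu|uu] : dot u u <= 0 \/ 0 < dot u u by have := dot_sq_ge0 u; lra.
  by left; apply: null_comb_head0; exact: dot_sq_eq0.
case: (Rlt_le_dec 0 (dot w' u)) => w'u.
  by right; exists w' => j; case: (unliftP ord0 j) => [j'|] ->; [exact: w'V | exact: w'u].
have a0 : 0 <= - dot w' u by lra.
case: (IH (fun j i => dot w' (V j) * u i + - dot w' u * V j i)).
  by left; exact: null_comb_proj w'V a0 _.
by right; apply: (separated_proj (w' := w')).
Qed.

Lemma gordan (J : finType) (v : J -> vec n) :
  (exists t : J -> R, (forall m, 0 <= t m) /\ \big[Rplus/R0]_(m : J) t m = 1 /\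
     forall i, \big[Rplus/R0]_(m : J) (t m * v m i) = 0)
  \/ separated v.
Proof.
case: (gordan_ord (fun j : 'I_#|J| => v (enum_val j))) => [[c [c0 [cs cv]]] | [w wv]].
  left; set C := \big[Rplus/R0]_(j < #|J|) c j.
  have C0 : C <> 0 by apply: Rgt_not_eq.
  have reindex_J : forall F : 'I_#|J| -> R,
      \big[Rplus/R0]_(j < #|J|) F j = \big[Rplus/R0]_(m : J) F (enum_rank m).
    by move=> F; rewrite (reindex enum_rank) //; apply: onW_bij; exact: enum_rank_bij.
  exists (fun m => c (enum_rank m) / C); split.
    by move=> m; apply: Rmult_le_pos => //; apply/Rlt_le/Rinv_0_lt_compat.
  split; first by rewrite -(reindex_J (fun j => c j / C)) -big_distrl /= -/C; field.
  move=> i; transitivity ((\big[Rplus/R0]_(j < #|J|) (c j * v (enum_val j) i)) / C).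
    rewrite /Rdiv big_distrl (reindex_J (fun j => c j * v (enum_val j) i * / C)) /=.
    by apply: eq_bigr => m _; rewrite enum_rankK; field.
  by rewrite cv; field.
by right; exists w => m; have := wv (enum_rank m); rewrite enum_rankK.
Qed.

End Gordan.

Section Polytopes.
Variable n : nat.
Implicit Types (d y z v : vec n) (P : vec n -> Prop).

Definition lin_sq d (e : R) y : R := dot d y + e * dot y y.

Lemma conv_hull_generator k (p : 'I_k -> vec n) j : conv_hull p (p j).
Proof.
exists (fun j' => if j' == j then 1 else 0); split; first by move=> j'; case: (j' == j); lra.
split; first by rewrite (bigD1 j) //= eqxx big1 => [|j' /negbTE ->]; ring.
by move=> i; rewrite (bigD1 j) //= eqxx big1 => [|j' /negbTE ->]; ring.
Qed.

Lemma conv_hull_lin_sq_le k (p : 'I_k -> vec n) d (e b : R) y :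
  0 <= e -> (forall j, lin_sq d e (p j) <= b) -> conv_hull p y -> lin_sq d e y <= b.
Proof.
move=> e0 pb [c [c0 [cs cy]]].
have Jy := dot_sq_jensen c0 cs cy.
have -> : b = \big[Rplus/R0]_(j < k) (c j * b) by rewrite -big_distrl /= cs; ring.
apply: (@Rle_trans _ (\big[Rplus/R0]_(j < k) (c j * lin_sq d e (p j)))); last first.
  by apply: sum_le => j; apply: Rmult_le_compat_l.
rewrite /lin_sq (dot_comb_points d cy).
have -> : \big[Rplus/R0]_(j < k) (c j * (dot d (p j) + e * dot (p j) (p j))) =
    \big[Rplus/R0]_(j < k) (c j * dot d (p j))
    + e * \big[Rplus/R0]_(j < k) (c j * dot (p j) (p j)).
  by rewrite big_distrr -big_split /=; apply: eq_bigr => j _; ring.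
by have := Rmult_le_compat_l _ _ _ e0 Jy; lra_sums.
Qed.

Lemma polytope_lin_sq_bounded P d (e : R) : is_polytope P -> 0 <= e ->
  exists b, forall y, P y -> lin_sq d e y <= b.
Proof.
move=> [k [p [k0 HP]]] e0.
have [j1 j1max] := finite_argmax (fun j => lin_sq d e (p j)) (Ordinal k0).
by exists (lin_sq d e (p j1)) => y /HP; apply: conv_hull_lin_sq_le.
Qed.

Lemma dot_0l y : dot (fun _ => 0) y = 0.
Proof. by rewrite /dot big1 // => i _; ring. Qed.

Lemma polytope_norm_bounded P : is_polytope P ->
  exists K, 0 <= K /\ forall y, P y -> dot y y <= K.
Proof.
move=> /(@polytope_lin_sq_bounded _ (fun _ => 0) 1) [|b bP]; first lra.
exists (Rmax 0 b); split; first exact: Rmax_l.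
move=> y /bP; rewrite /lin_sq dot_0l => yb; apply: Rle_trans (Rmax_r 0 b); lra.
Qed.

Lemma lin_sq_argmax_vertex P d (e : R) v : 0 < e -> P v ->
  (forall y, P y -> lin_sq d e y <= lin_sq d e v) -> is_vertex P v.
Proof.
move=> e0 Pv vmax; split=> // y z l Py Pz [l0 l1] vyz.
have Ev := dot_sq_convex_comb vyz.
have Ed : dot d v = l * dot d y + (1 - l) * dot d z by apply: dot_linr.
set q := dot (fun i => y i - z i) (fun i => y i - z i).
suff q0 : q <= 0 by move=> i; have := dot_sq_eq0 q0 i; lra.
have hy := Rmult_le_compat_l l _ _ (Rlt_le _ _ l0) (vmax y Py).
have hz := Rmult_le_compat_l (1 - l) _ _ (ltac:(lra)) (vmax z Pz).
move: hy hz; rewrite /lin_sq Ed Ev -/q; clearbody q => hy hz.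
have le0 : 0 < l * (1 - l) * e by apply: Rmult_lt_0_compat => //; apply: Rmult_lt_0_compat; lra.
apply: Rnot_lt_le => q0; have := Rmult_lt_0_compat _ _ le0 q0; nra.
Qed.

(* If a linear functional is positive somewhere on a polytope, it is
   positive at some vertex: maximise <d, .> + e |.|^2 for e small. *)
Lemma exists_pos_vertex P d : is_polytope P ->
  (exists r, P r /\ 0 < dot d r) -> exists v, is_vertex P v /\ 0 < dot d v.
Proof.
move=> [k [p [k0 HP]]] [r [Pr dr]].
have [j0 dj0] : exists j0, 0 < dot d (p j0).
  apply: NNPP => dp; have : lin_sq d 0 r <= 0; last by rewrite /lin_sq; lra.
  apply: conv_hull_lin_sq_le (Rle_refl 0) _ ((HP r).1 Pr) => j.
  by rewrite /lin_sq Rmult_0_l Rplus_0_r; apply: Rnot_lt_le => pj; apply: dp; exists j.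
have [K [K0 pK]] : exists K, 0 <= K /\ forall j, dot (p j) (p j) <= K.
  by have [K [K0 PK]] := polytope_norm_bounded (ex_intro _ k (ex_intro _ p (conj k0 HP)));
    exists K; split=> // j; apply/PK/HP/conv_hull_generator.
set e := dot d (p j0) / (1 + K).
have e0 : 0 < e by apply: Rdiv_lt_0_compat; lra.
have eK : e * (1 + K) = dot d (p j0) by rewrite /e; field; lra.
clearbody e.
have [j1 j1max] := finite_argmax (fun j => lin_sq d e (p j)) j0.
have Pv : P (p j1) by apply/HP/conv_hull_generator.
exists (p j1); split.
  apply: (lin_sq_argmax_vertex e0 Pv) => y /HP.
  exact: conv_hull_lin_sq_le (Rlt_le _ _ e0) j1max.
have := j1max j0; have := pK j0; have := pK j1; have := dot_sq_ge0 (p j0).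
rewrite /lin_sq; nra.
Qed.

End Polytopes.

Section BoundedRateSystems.
Variables (M : finType) (n : nat) (Rates : M -> vec n -> Prop).
Hypothesis HB : is_BMS Rates.

Lemma BMS_rates_bounded : exists K, 0 <= K /\ forall m r, Rates m r -> dot r r <= K.
Proof.
have [Kf Kfm] := @functional_choice _ _ _ (fun m => polytope_norm_bounded (HB.2.2 m)).
exists (\big[Rplus/R0]_(m : M) Kf m); split; first by apply: sum_ge0 => m; exact: (Kfm m).1.
move=> m r /(Kfm m).2 rK; apply: Rle_trans rK _.
exact: (term_le_sum m (fun m => (Kfm m).1)).
Qed.

(* Otherwise each
   mode has a vertex rate r_m with <d, r_m> > 0, and the instance (r_m)_m of
   Ext(H) could not average to 0. *)
Lemma safe_BMS_descent_mode : safe_MMS Rates ->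
  forall d : vec n, exists m : M, forall r, Rates m r -> dot d r <= 0.
Proof.
move=> Hsafe d; apply: NNPP => no_mode.
have pos_vertex : forall m, exists v, is_vertex (Rates m) v /\ 0 < dot d v.
  move=> m; apply: exists_pos_vertex; first exact: HB.2.2.
  apply: NNPP => no_pos; apply: no_mode; exists m => r Rr.
  by apply: Rnot_lt_le => dr; apply: no_pos; exists r.
have [Rc Rcm] := @functional_choice _ _ _ pos_vertex.
have [t [t0 [ts tRc]]] := Hsafe Rc (fun m => (Rcm m).1).
have := weighted_pos t0 (ltac:(rewrite ts; lra)) (fun m => (Rcm m).2).
rewrite -(@dot_comb_points _ _ t Rc d (fun i => \big[Rplus/R0]_(m : M) (t m * Rc m i))) //.
by rewrite /dot big1 => [|i _]; [lra | rewrite tRc; ring].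
Qed.

End BoundedRateSystems.

Section Runs.
Variables (M : finType) (n : nat) (x0 : vec n).
Variables (sg : sched_strategy M n) (en : env_strategy M n).

(* Duration t_(k+1) and rate r_(k+1) of round k+1 of the run. *)
Local Notation tm k := (next_round x0 sg en k).1.2.
Local Notation rt k := (next_round x0 sg en k).2.

Lemma run_pos_0 i : run_pos x0 sg en 0 i = x0 i.
Proof. by rewrite /run_pos /Defs.pos /=; ring. Qed.

Lemma run_pos_S k i : run_pos x0 sg en k.+1 i = run_pos x0 sg en k i + tm k * rt k i.
Proof.
rewrite /run_pos /Defs.pos /= foldr_rcons.
have shift : forall (rs : seq (round M n)) (z : R),
    foldr (fun (rd : round M n) acc => rd.1.2 * rd.2 i + acc) z rs =
    foldr (fun (rd : round M n) acc => rd.1.2 * rd.2 i + acc) R0 rs + z.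
  by elim=> [|rd rs IH] z /=; [ring | rewrite IH; ring].
by rewrite shift /=; ring.
Qed.

Lemma size_run_rounds k : size (run_rounds x0 sg en k) = k.
Proof. by elim: k => [|k IH] //=; rewrite size_rcons IH. Qed.

Lemma run_drift (w : vec n) (delta : R) :
  (forall k, 0 <= tm k) -> (forall k, delta <= dot w (rt k)) ->
  forall k, dot w x0 + delta * \big[Rplus/R0]_(i < k) tm i <= dot w (run_pos x0 sg en k).
Proof.
move=> t0 dw; elim=> [|k IH].
  rewrite big_ord0 (_ : dot w (run_pos x0 sg en 0) = dot w x0); first lra.
  by apply: eq_bigr => i _; rewrite run_pos_0.
rewrite (sum_ord_recr _ (fun i => tm i)) (@dot_linr _ w (run_pos x0 sg en k) (rt k) 1 (tm k) (run_pos x0 sg en k.+1)); last first.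
  by move=> i; rewrite run_pos_S; ring.
have := dw k; have := t0 k; nra_sums.
Qed.

End Runs.

(* Necessity: if some instance Rc of Ext(H) is unsafe, Gordan's alternative
   gives w with <w, Rc m> >= delta > 0 for all m.  The environment answering
   every move (m, t) with Rc m pushes <w, x_k> up by at least delta times the
   elapsed time, which diverges, so the run leaves the bounded set S. *)
Lemma winning_implies_safe (M : finType) (n : nat) (Rates : M -> vec n -> Prop)
  (S : vec n -> Prop) (x0 : vec n) :
  is_polytope S -> (exists sg : sched_strategy M n, winning Rates S x0 sg) -> safe_MMS Rates.
Proof.
move=> HS [sg [sg_pos sg_wins]] Rc HRc.
case: (gordan Rc) => [//|[w wRc]]; exfalso.
have [delta [delta0 deltaRc]] := uniform_pos_lower_bound wRc.
pose en : env_strategy M n := fun _ m _ => Rc m.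
have [Ssafe nonZeno] := sg_wins en (fun _ m _ => (HRc m).1).
have [B SB] := polytope_lin_sq_bounded w HS (Rle_refl 0).
have [k Tk] := nonZeno ((B - dot w x0) / delta).
have drift := run_drift (x0 := x0) (en := en) (fun k => Rlt_le _ _ (sg_pos _)) (fun k => deltaRc _) k.
have := SB _ (Ssafe k).1; rewrite /lin_sq.
have : delta * ((B - dot w x0) / delta) = B - dot w x0 by field; lra.
move: drift Tk; nra_sums.
Qed.

(* ln (a + 1) - ln a <= 1/a, from 1 + x <= exp x. *)
Lemma ln_succ_sub_le_inv (a : R) : 0 < a -> ln (a + 1) - ln a <= / a.
Proof.
move=> a0; have ia : 0 < / a by apply: Rinv_0_lt_compat.
have -> : a + 1 = a * (1 + / a) by field; lra.
rewrite ln_mult //; last lra.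
have := ln_increasing (1 + / a) (exp (/ a)) (ltac:(lra)) (exp_ineq1 (/ a) (Rgt_not_eq _ _ ia)).
rewrite ln_exp; lra.
Qed.

Lemma harmonic_ln_lower k : ln (INR k + 2) - ln 2 <= \big[Rplus/R0]_(i < k) / (INR i + 2).
Proof.
elim: k => [|k IH]; first by rewrite big_ord0 /= Rplus_0_l; lra.
rewrite (sum_ord_recr _ (fun i => / (INR i + 2))) S_INR.
have := pos_INR k; have := @ln_succ_sub_le_inv (INR k + 2).
rewrite (_ : INR k + 2 + 1 = INR k + 1 + 2); [lra | ring].
Qed.

Lemma harmonic_unbounded (c B : R) : 0 < c ->
  exists k, B < \big[Rplus/R0]_(i < k) (c / (INR i + 2)).
Proof.
move=> c0; have [k kB] := INR_archimed 1 (exp (B / c + ln 2)) (ltac:(lra)).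
exists k; rewrite /Rdiv -big_distrr /=.
have := harmonic_ln_lower k; have := exp_pos (B / c + ln 2) => e0.
have := ln_increasing _ (INR k + 2) e0 (ltac:(lra)); rewrite ln_exp => lnk hk.
have : B / c < \big[Rplus/R0]_(i < k) / (INR i + 2) by lra.
move=> /(Rmult_lt_compat_l c _ _ c0); rewrite (_ : c * (B / c) = B) //; field; lra.
Qed.

(* Arithmetic behind the telescoping invariant below. *)
Lemma telescoping_bound (x : R) : 0 <= x ->
  (1 - / (x + 1)) + / (x + 2) * / (x + 2) <= 1 - / (x + 1 + 1).
Proof.
move=> x0; rewrite (_ : x + 1 + 1 = x + 2); last ring.
have : 0 < / ((x + 1) * (x + 2) * (x + 2)).
  by apply: Rinv_0_lt_compat; apply: Rmult_lt_0_compat; [apply: Rmult_lt_0_compat|]; lra.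
have : / (x + 1) - / (x + 2) - / (x + 2) * / (x + 2) = / ((x + 1) * (x + 2) * (x + 2)).
  by field; lra.
lra.
Qed.

(* Steps of length c / (k + 2) in directions making an obtuse angle with
   the current displacement D k keep the displacement bounded:
   |D k|^2 <= K c^2 (1 - 1/(k+1)), and the segment of step k stays within
   the ball of radius c sqrt K. *)
Section ShrinkingSteps.
Variables (n : nat) (D r : nat -> vec n) (c K : R).
Local Notation tau k := (c / (INR k + 2)).
Hypothesis K0 : 0 <= K.
Hypothesis c0 : 0 <= c.
Hypothesis D0 : forall i, D 0 i = 0.
Hypothesis DS : forall k i, D k.+1 i = D k i + tau k * r k i.
Hypothesis Dr : forall k, dot (D k) (r k) <= 0.
Hypothesis rK : forall k, dot (r k) (r k) <= K.

Let Kcc : 0 <= K * c * c.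
Proof. by have := Rle_0_sqr c; rewrite /Rsqr; nra. Qed.

Lemma shrinking_step k t (z : vec n) : 0 <= t <= tau k ->
  (forall i, z i = D k i + t * r k i) ->
  dot (D k) (D k) <= K * c * c * (1 - / (INR k + 1)) ->
  dot z z <= K * c * c * (1 - / (INR k + 1 + 1)).
Proof.
move=> [t0 tk] Ez Dk; have k0 := pos_INR k.
apply: Rle_trans (dot_sq_step (Dr k) t0 (rK k) Ez) _.
have : t * t * K <= tau k * tau k * K by apply: Rmult_le_compat_r => //; apply: Rmult_le_compat.
rewrite (_ : tau k * tau k * K = K * c * c * (/ (INR k + 2) * / (INR k + 2))); last by field; lra.
have := Rmult_le_compat_l _ _ _ Kcc (telescoping_bound k0).
lra.
Qed.

Lemma shrinking_steps_invariant k : dot (D k) (D k) <= K * c * c * (1 - / (INR k + 1)).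
Proof.
elim: k => [|k IH].
  rewrite /dot big1 => [|i _]; last by rewrite D0; ring.
  by rewrite /= Rplus_0_l Rinv_1; lra.
rewrite S_INR; apply: (shrinking_step _ (DS k) IH).
split; last exact: Rle_refl.
rewrite /Rdiv; apply: Rmult_le_pos => //; apply/Rlt_le/Rinv_0_lt_compat; have := pos_INR k; lra.
Qed.

Lemma shrinking_steps_bounded k t (z : vec n) : 0 <= t <= tau k ->
  (forall i, z i = D k i + t * r k i) -> dot z z <= K * c * c.
Proof.
move=> tk Ez; have := shrinking_step tk Ez (shrinking_steps_invariant k).
have : 0 <= K * c * c * / (INR k + 1 + 1).
  by apply: Rmult_le_pos => //; apply/Rlt_le/Rinv_0_lt_compat; have := pos_INR k; lra.
lra.
Qed.

End ShrinkingSteps.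

Lemma dot_sq_lt_coord n (u : vec n) (eps : R) : 0 < eps -> dot u u < eps * eps ->
  forall i, Rabs (u i) < eps.
Proof. by move=> eps0 ueps i; have := dot_sq_term u i => ui; apply: Rabs_def1; nra. Qed.

(* The scheduler's strategy: in round k+1 play, for the displacement
   d = x_k - x0, a mode all of whose rates r satisfy <d, r> <= 0, for the
   duration c / (k + 2). *)
Definition descent_strategy (M : finType) (n : nat) (mode : vec n -> M) (c : R)
  (x0 : vec n) : sched_strategy M n :=
  fun h => (mode (fun i => Defs.pos x0 h.2 i - x0 i), c / (INR (size h.2) + 2)).

(* Sufficiency: with c small enough, the descent strategy keeps the run in
   the ball |x - x0|^2 <= K c^2 inside S, and the durations diverge. *)
Lemma safe_implies_winning (M : finType) (n : nat) (Rates : M -> vec n -> Prop)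
  (S : vec n -> Prop) (x0 : vec n) :
  is_BMS Rates -> in_interior S x0 -> safe_MMS Rates ->
  exists sg : sched_strategy M n, winning Rates S x0 sg.
Proof.
move=> HB [eps [eps0 Sball]] Hsafe.
have [mode mode_descent] := @functional_choice _ _ _ (safe_BMS_descent_mode HB Hsafe).
have [K [K0 RK]] := BMS_rates_bounded HB.
set c := eps / (1 + K).
have c0 : 0 < c by apply: Rdiv_lt_0_compat; lra.
have Kc : K * c * c < eps * eps.
  have : c * (1 + K) = eps by rewrite /c; field; lra.
  clearbody c; nra.
have inS : forall y, dot (fun i => y i - x0 i) (fun i => y i - x0 i) <= K * c * c -> S y.
  by move=> y yx0; apply: Sball; apply: (@dot_sq_lt_coord n (fun i => y i - x0 i) eps eps0); lra.
exists (descent_strategy mode c x0); split.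
  by move=> h; apply: Rdiv_lt_0_compat => //; have := pos_INR (size h.2); lra.
move=> en ven; set sg := descent_strategy mode c x0.
have tk : forall k, (next_round x0 sg en k).1.2 = c / (INR k + 2).
  by move=> k; rewrite /next_round /= size_run_rounds.
pose D k i := run_pos x0 sg en k i - x0 i.
have bounded := @shrinking_steps_bounded n D (fun k => (next_round x0 sg en k).2) c K K0
  (Rlt_le _ _ c0) (fun i => ltac:(by rewrite /D run_pos_0; ring))
  (fun k i => ltac:(by rewrite /D run_pos_S tk; ring))
  (fun k => mode_descent _ _ (ven _ _ _)) (fun k => RK _ _ (ven _ _ _)).
have in_segment : forall k t y, 0 <= t <= c / (INR k + 2) ->
    (forall i, y i = run_pos x0 sg en k i + t * (next_round x0 sg en k).2 i) -> S y.
  by move=> k t y tkt Ey; apply/inS/(bounded k t _ tkt) => i; rewrite Ey /D; ring.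
have tk0 : forall k, 0 <= 0 <= c / (INR k + 2).
  by move=> k; split; [lra | apply/Rlt_le/Rdiv_lt_0_compat => //; have := pos_INR k; lra].
split.
  move=> k; split; first by apply: (in_segment k 0 _ (tk0 k)) => i; ring.
  by move=> t; rewrite tk => tk'; exact: in_segment k t _ tk' (fun i => erefl).
move=> B; have [k Bk] := harmonic_unbounded B c0.
by exists k; under eq_bigr => i _ do rewrite tk.
Qed.

Unset Implicit Arguments.
Set Strict Implicit.

Theorem theorem3 (M : finType) (n : nat) (Rates : M -> vec n -> Prop)
  (S : vec n -> Prop) (x0 : vec n) :
  is_BMS Rates -> is_polytope S -> in_interior S x0 ->
  ((exists sg : sched_strategy M n, winning Rates S x0 sg) <-> safe_MMS Rates).
Proof.
move=> HB HS Hx0; split; first exact: winning_implies_safe.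
exact: safe_implies_winning.
Qed.
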